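(* Let $\mathscr{A}$ be a unital Banach algebra, $\mathscr{B},\mathscr{C}$ unital Banach algebras, and $\varphi:\mathscr{A}\to\mathscr{B}$, $\psi:\mathscr{A}\to\mathscr{C}$ algebra homomorphisms. The following are equivalent: (i) every bounded Jordan $(\varphi,\psi)$-derivation from $\mathscr{A}$ into any unital Banach $\mathscr{B}$-$\mathscr{C}$-bimodule is a $(\varphi,\psi)$-derivation; (ii) every bounded trilinear form $V:\mathscr{A}\times\mathscr{C}\times\mathscr{B}\to\mathbb{C}$ satisfying $$V(a^{2},c,b)=V(a,\psi(a)c,b)+V(a,c,b\varphi(a))\quad(a\in\mathscr{A},b\in\mathscr{B},c\in\mathscr{C})$$ also satisfies $$V(ad,c,b)=V(a,\psi(d)c,b)+V(d,c,b\varphi(a))\quad(a,d\in\mathscr{A},b\in\mathscr{B},c\in\mathscr{C}).$$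
   Context: A Banach $\mathscr{B}$-$\mathscr{C}$-bimodule is a Banach space $X$ that is a left Banach $\mathscr{B}$-module and a right Banach $\mathscr{C}$-module with commuting actions and $\|b\cdot x\cdot c\|\le\|b\|\|x\|\|c\|$; it is unital if the units of $\mathscr{B},\mathscr{C}$ act as the identity. A linear map $\delta:\mathscr{A}\to X$ is a Jordan $(\varphi,\psi)$-derivation if $\delta(a^{2})=\varphi(a)\cdot\delta(a)+\delta(a)\cdot\psi(a)$ for all $a$, and a $(\varphi,\psi)$-derivation if $\delta(ab)=\delta(a)\cdot\psi(b)+\varphi(a)\cdot\delta(b)$ for all $a,b$. *)

From mathcomp Require Import all_boot all_order all_algebra.
From mathcomp Require Import complex.
From mathcomp Require Import all_classical all_reals all_analysis.
Import numFieldNormedType.Exports.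
Import Order.TTheory GRing.Theory Num.Theory.
Set Implicit Arguments. Unset Strict Implicit. Unset Printing Implicit Defensive.
Local Open Scope ring_scope.

Section BanachDefs.
Variable K : numFieldType.

Record unital_banach_algebra (A : completeNormedModType K)
    (mul : A -> A -> A) (one : A) : Prop := {
  ba_mulA : forall a b c, mul a (mul b c) = mul (mul a b) c;
  ba_mul1l : forall a, mul one a = a;
  ba_mul1r : forall a, mul a one = a;
  ba_mulDl : forall a b c, mul (a + b) c = mul a c + mul b c;
  ba_mulDr : forall a b c, mul a (b + c) = mul a b + mul a c;
  ba_mulZl : forall (k : K) a b, mul (k *: a) b = k *: mul a b;
  ba_mulZr : forall (k : K) a b, mul a (k *: b) = k *: mul a b;
  ba_norm_mul : forall a b, `|mul a b| <= `|a| * `|b|;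
  ba_norm_one : `|one| = 1 }.

Definition is_linear (U V : lmodType K) (f : U -> V) : Prop :=
  (forall u v, f (u + v) = f u + f v) /\ (forall (k : K) u, f (k *: u) = k *: f u).

Definition is_alg_hom (A B : lmodType K) (mulA : A -> A -> A) (mulB : B -> B -> B)
    (f : A -> B) : Prop :=
  is_linear f /\ (forall a b, f (mulA a b) = mulB (f a) (f b)).

Definition is_bounded (U V : normedModType K) (f : U -> V) : Prop :=
  exists M : K, forall u, `|f u| <= M * `|u|.

Record unital_banach_bimodule (B C X : completeNormedModType K)
    (mulB : B -> B -> B) (oneB : B) (mulC : C -> C -> C) (oneC : C)
    (lact : B -> X -> X) (ract : X -> C -> X) : Prop := {
  bm_lactDl : forall b1 b2 x, lact (b1 + b2) x = lact b1 x + lact b2 x;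
  bm_lactDr : forall b x y, lact b (x + y) = lact b x + lact b y;
  bm_lactZl : forall (k : K) b x, lact (k *: b) x = k *: lact b x;
  bm_lactZr : forall (k : K) b x, lact b (k *: x) = k *: lact b x;
  bm_ractDl : forall x y c, ract (x + y) c = ract x c + ract y c;
  bm_ractDr : forall x c1 c2, ract x (c1 + c2) = ract x c1 + ract x c2;
  bm_ractZl : forall (k : K) x c, ract (k *: x) c = k *: ract x c;
  bm_ractZr : forall (k : K) x c, ract x (k *: c) = k *: ract x c;
  bm_lactA : forall b1 b2 x, lact (mulB b1 b2) x = lact b1 (lact b2 x);
  bm_ractA : forall x c1 c2, ract x (mulC c1 c2) = ract (ract x c1) c2;
  bm_comm : forall b x c, ract (lact b x) c = lact b (ract x c);
  bm_norm : forall b x c, `|ract (lact b x) c| <= `|b| * `|x| * `|c|;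
  bm_lact1 : forall x, lact oneB x = x;
  bm_ract1 : forall x, ract x oneC = x }.

Definition is_jordan_der (A B C X : Type) (mulA : A -> A -> A)
    (lact : B -> X -> X) (ract : X -> C -> X) (addX : X -> X -> X)
    (phi : A -> B) (psi : A -> C) (d : A -> X) : Prop :=
  forall a, d (mulA a a) = addX (lact (phi a) (d a)) (ract (d a) (psi a)).

Definition is_der (A B C X : Type) (mulA : A -> A -> A)
    (lact : B -> X -> X) (ract : X -> C -> X) (addX : X -> X -> X)
    (phi : A -> B) (psi : A -> C) (d : A -> X) : Prop :=
  forall a b, d (mulA a b) = addX (ract (d a) (psi b)) (lact (phi a) (d b)).

Definition is_bounded_trilinear (A C B : normedModType K) (V : A -> C -> B -> K) : Prop :=
  (forall c b, is_linear (fun a : A => (V a c b : K^o)))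
  /\ (forall a b, is_linear (fun c : C => (V a c b : K^o)))
  /\ (forall a c, is_linear (fun b : B => (V a c b : K^o)))
  /\ (exists M : K, forall a c b, `|V a c b| <= M * `|a| * `|c| * `|b|).

End BanachDefs.

From HB Require Import structures.
From mathcomp Require Import all_boot all_order all_algebra.
From mathcomp Require Import complex.
From mathcomp Require Import all_classical all_reals all_analysis.
From mathcomp Require Import lra ring.
Import numFieldNormedType.Exports.
Import Order.TTheory GRing.Theory Num.Theory.
Set Implicit Arguments. Unset Strict Implicit. Unset Printing Implicit Defensive.
Local Open Scope ring_scope.
Local Open Scope complex_scope.

(* (i) => (ii): a bounded trilinear form V yields the map a |-> V(a, ., .) into
   the Banach B-C-bimodule of bounded bilinear maps on C x B, with actions
   (b'.x.c')(c, b) = x(c' c, b b').  The Jordan identity of V is exactly the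
   Jordan derivation identity of this map, and the derivation identity given
   by (i), evaluated at (c, b), is the identity required in (ii).
   (ii) => (i): if delta(a d) differs from delta(a).psi(d) + phi(a).delta(d),
   Hahn-Banach gives a bounded functional f that does not vanish on the
   difference; V(a, c, b) := f(b.delta(a).c) is a bounded trilinear form with
   the Jordan identity, and (ii) at c = 1, b = 1 forces f to vanish on it. *)

Section RealNorm.
Variable R : realType.
Local Notation K := R[i].

Lemma ger0_ReE (z : K) : 0 <= z -> z = (complex.Re z)%:C.
Proof. by move=> z0; have := ger0_Im z0; case: z z0 => a b /= _ ->. Qed.

Lemma gtr0_ofReal (e : K) : 0 < e -> exists2 r : R, 0 < r & e = r%:C.
Proof.
move=> e0; exists (complex.Re e); last exact/ger0_ReE/ltW.
by rewrite -ltcR -ger0_ReE ?ltW.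
Qed.

Definition rnorm (V : normedModType K) (v : V) : R := complex.Re `|v|.

Lemma rnormE (V : normedModType K) (v : V) : `|v| = (rnorm v)%:C.
Proof. exact/ger0_ReE/normr_ge0. Qed.

Lemma rnormKE (k : K) : `|k| = (rnorm (k : K^o))%:C.
Proof. exact: (rnormE (k : K^o)). Qed.

Lemma rnorm_ge0 (V : normedModType K) (v : V) : 0 <= rnorm v.
Proof. by rewrite -ler0c -rnormE. Qed.

Lemma rnormD (V : normedModType K) (u v : V) : rnorm (u + v) <= rnorm u + rnorm v.
Proof. by rewrite -lecR rmorphD /= -!rnormE ler_normD. Qed.

Lemma rnormZ (V : normedModType K) (k : K) (v : V) :
  rnorm (k *: v) = rnorm (k : K^o) * rnorm v.
Proof. by apply: complexI; rewrite rmorphM /= -!rnormE normrZ. Qed.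

Lemma rnormM (a b : K) : rnorm (a * b : K^o) = rnorm (a : K^o) * rnorm (b : K^o).
Proof. exact: (rnormZ (V := K^o)). Qed.

Lemma rnormN (V : normedModType K) (v : V) : rnorm (- v) = rnorm v.
Proof. by rewrite /rnorm normrN. Qed.

Lemma rnorm0 (V : normedModType K) : rnorm (0 : V) = 0.
Proof. by rewrite /rnorm normr0. Qed.

Lemma rnorm_eq0 (V : normedModType K) (v : V) : rnorm v = 0 -> v = 0.
Proof. by move=> h; apply/normr0_eq0; rewrite rnormE h. Qed.

Lemma rnormC (r : R) : rnorm (r%:C : K^o) = `|r|.
Proof. by rewrite /rnorm /= expr0n /= addr0 sqrtr_sqr. Qed.

Lemma rnorm_i : rnorm ('i : K^o) = 1.
Proof. by rewrite /rnorm /= expr0n /= add0r expr1n sqrtr1. Qed.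

Lemma rnorm_le (V : normedModType K) (v : V) (M : K) (r : R) :
  0 <= r -> `|v| <= M * r%:C -> rnorm v <= rnorm (M : K^o) * r.
Proof.
move=> r0 h; have h0 : 0 <= M * r%:C := le_trans (normr_ge0 _) h.
have e : M * r%:C = `|M| * r%:C.
  by rewrite -(ger0_norm h0) normrM (ger0_norm (x := r%:C)) // ler0c.
by rewrite e rnormE rnormKE -rmorphM lecR in h.
Qed.

Lemma ball_rnorm (V : normedModType K) (x y : V) (r : R) :
  ball x r%:C y <-> rnorm (x - y) < r.
Proof.
rewrite -ball_normE; change (`|x - y| < r%:C <-> rnorm (x - y) < r).
by rewrite rnormE ltcR.
Qed.

End RealNorm.

Section RealHahnBanach.
Variables (R : realType) (V : lmodType R) (p : V -> R).
Hypothesis pZ : forall (t : R) u, p (t *: u) = `|t| * p u.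
Hypothesis pD : forall u v, p (u + v) <= p u + p v.
Variable x0 : V.

Lemma seminorm0 : p 0 = 0.
Proof. by rewrite -(scale0r 0) pZ normr0 mul0r. Qed.

Lemma seminormN u : p (- u) = p u.
Proof. by rewrite -scaleN1r pZ normrN1 mul1r. Qed.

Lemma seminorm_ge0 u : 0 <= p u.
Proof. by have := pD u (- u); rewrite subrr seminorm0 seminormN; lra. Qed.

(* The last clause, instead of [line_graph `<=` G], keeps the predicate closed
   under the empty union, as [Zorn_bigcup] requires. *)
Definition dominated_graph (G : set (V * R)) : Prop :=
  [/\ (forall u r s, G (u, r) -> G (u, s) -> r = s),
      (forall u r v s, G (u, r) -> G (v, s) -> G (u + v, r + s)),
      (forall u r t, G (u, r) -> G (t *: u, t * r)),
      (forall u r, G (u, r) -> r <= p u)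
    & ((exists z, G z) -> G (x0, p x0))].

Lemma dominated_graph_bigcup (F : set (set (V * R))) :
  (F `<=` dominated_graph)%classic -> total_on F subset ->
  dominated_graph (\bigcup_(G in F) G)%classic.
Proof.
move=> Fg Ftot; split.
- move=> u r s [G FG Gr] [H FH Hs]; case: (Ftot G H FG FH) => [GH|HG].
  + by case: (Fg H FH) => fun_H _ _ _ _; apply: fun_H (GH _ Gr) Hs.
  + by case: (Fg G FG) => fun_G _ _ _ _; apply: fun_G Gr (HG _ Hs).
- move=> u r v s [G FG Gr] [H FH Hs]; case: (Ftot G H FG FH) => [GH|HG].
  + by case: (Fg H FH) => _ add_H _ _ _; exists H => //; apply: add_H (GH _ Gr) Hs.
  + by case: (Fg G FG) => _ add_G _ _ _; exists G => //; apply: add_G Gr (HG _ Hs).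
- move=> u r t [G FG Gr]; case: (Fg G FG) => _ _ scale_G _ _.
  by exists G => //; apply: scale_G.
- by move=> u r [G FG Gr]; case: (Fg G FG) => _ _ _ le_G _; apply: le_G.
- move=> [z [G FG Gz]]; case: (Fg G FG) => _ _ _ _ x0_G.
  by exists G => //; apply: x0_G; exists z.
Qed.

Definition line_graph : set (V * R) := [set (t *: x0, t * p x0) | t in setT]%classic.

Lemma dominated_line_graph : dominated_graph line_graph.
Proof.
split.
- move=> u r s [t _ [<- <-]] [t' _ [e <-]].
  have : `|t - t'| * p x0 = 0 by rewrite -pZ scalerBl -e subrr seminorm0.
  by move/eqP; rewrite mulf_eq0 normr_eq0 subr_eq0 => /orP[/eqP->|/eqP->];
    rewrite ?mulr0.
- move=> u r v s [t _ [<- <-]] [t' _ [<- <-]].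
  by exists (t + t') => //; rewrite scalerDl mulrDl.
- by move=> u r t [t' _ [<- <-]]; exists (t * t') => //; rewrite scalerA mulrA.
- move=> u r [t _ [<- <-]]; rewrite pZ.
  by apply: ler_wpM2r; [exact: seminorm_ge0 | exact: ler_norm].
- by move=> _; exists 1 => //; rewrite scale1r mul1r.
Qed.

Section OneStepExtension.
Variable G : set (V * R).
Hypotheses (domG : dominated_graph G) (G_neq0 : exists z, G z).
Variable y : V.
Hypothesis y_notin : forall r, ~ G (y, r).

Let G_fun := let: And5 h _ _ _ _ := domG in h.
Let G_add := let: And5 _ h _ _ _ := domG in h.
Let G_scale := let: And5 _ _ h _ _ := domG in h.
Let G_le := let: And5 _ _ _ h _ := domG in h.
Let G_x0 := let: And5 _ _ _ _ h := domG in h.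

Lemma dominated_graph0 : G (0, 0).
Proof. by have := G_scale 0 (G_x0 G_neq0); rewrite scale0r mul0r. Qed.

Lemma extension_gap u r v s : G (u, r) -> G (v, s) -> r - p (u - y) <= p (v + y) - s.
Proof.
move=> Gu Gv; have := G_le (G_add Gu Gv); have := pD (u - y) (v + y).
by rewrite addrACA addNr addr0; lra.
Qed.

Let slope_lbs : set R := [set z.2 - p (z.1 - y) | z in G]%classic.

Lemma has_sup_slope_lbs : has_sup slope_lbs.
Proof.
split; first by exists (0 - p (0 - y)), (0, 0); first exact: dominated_graph0.
by exists (p (0 + y) - 0) => _ [[u r] Gu <-]; exact: extension_gap Gu dominated_graph0.
Qed.

Let slope := sup slope_lbs.

Lemma slope_ge u r : G (u, r) -> r - p (u - y) <= slope.
Proof. by move=> Gu; apply: sup_upper_bound has_sup_slope_lbs _ _; exists (u, r). Qed.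

Lemma slope_le v s : G (v, s) -> slope <= p (v + y) - s.
Proof.
move=> Gv; apply: ge_sup; first by case: has_sup_slope_lbs.
by move=> _ [[u r] Gu <-]; exact: extension_gap Gu Gv.
Qed.

Definition extended_graph : set (V * R) :=
  [set (z.1 + t *: y, z.2 + t * slope) | z in G & t in setT]%classic.

Lemma extended_graph_coef u r u' r' t t' : G (u, r) -> G (u', r') ->
  u + t *: y = u' + t' *: y -> t = t'.
Proof.
move=> Gu Gu' e; apply/eqP/negP => /negP tt'.
have ty : (t - t') *: y = u' - u.
  by apply/eqP; rewrite scalerBl subr_eq addrAC -e addrC addKr.
have := G_scale (t - t')^-1 (G_add Gu' (G_scale (-1) Gu)).
by rewrite scaleN1r -ty scalerA mulVf ?subr_eq0 // scale1r; exact: y_notin.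
Qed.

Lemma extended_graph_le u r t : G (u, r) -> r + t * slope <= p (u + t *: y).
Proof.
move=> Gu; have [->|t0] := eqVneq t 0; first by rewrite mul0r scale0r !addr0 G_le.
have Gtu := G_scale t^-1 Gu.
have pt : p (u + t *: y) = `|t| * p (t^-1 *: u + y).
  by rewrite -pZ scalerDr scalerA mulfV // scale1r.
have [tp|tn] := ltP 0 t.
  have := slope_le Gtu; rewrite -(ler_pM2l tp) pt gtr0_norm //.
  by rewrite mulrBr mulrA mulfV // mul1r; lra.
have tn' : t < 0 by rewrite lt_neqAle t0.
have := slope_ge (G_scale (-1) Gtu).
rewrite scaleN1r mulN1r -(opprD (t^-1 *: u)) seminormN.
rewrite -(ler_nM2l tn') pt ltr0_norm //.
by rewrite mulrBr mulrN mulrA mulfV // mul1r mulNr; lra.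
Qed.

Lemma dominated_extended_graph : dominated_graph extended_graph.
Proof.
split.
- move=> w a b [[u r] Gu [t _ [e1 <-]]] [[u' r'] Gu' [t' _ [e2 <-]]] /=.
  move: e1 e2 => /= <- e; have et := extended_graph_coef Gu Gu' (esym e).
  subst t'; move/addIr: e => eu; subst u'.
  by rewrite (G_fun Gu Gu').
- move=> w a v b [[u r] Gu [t _ [<- <-]]] [[u' r'] Gu' [t' _ [<- <-]]] /=.
  exists (u + u', r + r'); first exact: G_add.
  exists (t + t') => //=; congr (_, _); first by rewrite scalerDl addrACA.
  by rewrite mulrDl addrACA.
- move=> w a c [[u r] Gu [t _ [<- <-]]] /=.
  exists (c *: u, c * r); first exact: G_scale.
  by exists (c * t) => //=; rewrite scalerDr scalerA mulrDr mulrA.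
- by move=> w a [[u r] Gu [t _ [<- <-]]]; exact: extended_graph_le.
- move=> _; exists (x0, p x0); first exact: G_x0.
  by exists 0 => //=; rewrite scale0r mul0r !addr0.
Qed.

Lemma extended_graph_proper : (G `<` extended_graph)%classic.
Proof.
split.
  move=> [u r] Gu; exists (u, r) => //; exists 0 => //=.
  by rewrite scale0r mul0r !addr0.
move=> sub; apply: (y_notin (r := 0 + 1 * slope)); apply: sub.
by exists (0, 0); [exact: dominated_graph0 | exists 1 => //=; rewrite scale1r add0r].
Qed.

End OneStepExtension.

Theorem real_hahn_banach : exists g : V -> R,
  [/\ forall u v, g (u + v) = g u + g v, forall t u, g (t *: u) = t * g u,
      forall u, g u <= p u & g x0 = p x0].
Proof.
have [G [domG Gmax]] := Zorn_bigcup dominated_graph_bigcup.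
have G_neq0 : exists z, G z.
  apply: contrapT => G0; apply: (Gmax line_graph) dominated_line_graph; split.
    by move=> z Gz; exfalso; apply: G0; exists z.
  by move=> sub; apply: G0; exists (1 *: x0, 1 * p x0); apply: sub; exists 1.
have total u : exists r, G (u, r).
  apply: contrapT => nGu.
  have y_notin r : ~ G (u, r) by move=> Gu; apply: nGu; exists r.
  exact: Gmax _ (extended_graph_proper domG G_neq0 y_notin)
    (dominated_extended_graph domG G_neq0 y_notin).
have [g Gg] := choice total; case: domG => G_fun G_add G_scale G_le G_x0.
exists g; split.
- by move=> u v; apply: G_fun (Gg (u + v)) (G_add _ _ _ _ (Gg u) (Gg v)).
- by move=> t u; apply: G_fun (Gg (t *: u)) (G_scale _ _ t (Gg u)).
- by move=> u; apply: G_le (Gg u).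
- exact: G_fun (Gg x0) (G_x0 G_neq0).
Qed.

End RealHahnBanach.

Section Realification.
Variables (R : realType) (X : lmodType R[i]).

Definition realified : Type := X.
HB.instance Definition _ := GRing.Zmodule.on realified.

Definition rscale (t : R) (v : realified) : realified := t%:C *: (v : X).

Lemma rscaleA s t v : rscale s (rscale t v) = rscale (s * t) v.
Proof. by rewrite /rscale scalerA rmorphM. Qed.

Lemma rscale1 : left_id 1 rscale.
Proof. by move=> v; rewrite /rscale rmorph1 scale1r. Qed.

Lemma rscaleDr : right_distributive rscale +%R.
Proof. by move=> t u v; rewrite /rscale scalerDr. Qed.

Lemma rscaleDl v : {morph rscale^~ v : s t / s + t}.
Proof. by move=> s t; rewrite /rscale rmorphD scalerDl. Qed.

HB.instance Definition _ :=
  GRing.Zmodule_isLmodule.Build R realified rscaleA rscale1 rscaleDr rscaleDl.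

End Realification.

Theorem separating_functional (R : realType) (X : normedModType R[i]) (x0 : X) :
  x0 != 0 -> exists f : X -> R[i],
    [/\ forall u v, f (u + v) = f u + f v, forall k u, f (k *: u) = k * f u,
        forall u, rnorm (f u : R[i]^o) <= 2 * rnorm u & f x0 != 0].
Proof.
move=> x0_neq0.
have pZ t (u : realified X) : rnorm (t *: u : X) = `|t| * rnorm (u : X).
  by rewrite rnormZ rnormC.
have [g [gD gZ gp gx0]] := real_hahn_banach pZ (@rnormD _ X) (x0 : realified X).
have gR (t : R) (u : X) : g (t%:C *: u) = t * g u := gZ t u.
have gN u : g (- u) = - g u by rewrite -scaleN1r gZ mulN1r.
have g_abs u : `|g u| <= rnorm u.
  by rewrite ler_norml gp andbT; have := gp (- u); rewrite gN rnormN; lra.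
have ii : 'i * 'i = -1 :> R[i] by rewrite -expr2 sqr_i.
(* complex-linear as soon as g is real-linear *)
pose f (u : X) := (g u)%:C - 'i * (g ('i *: u))%:C.
have fD u v : f (u + v) = f u + f v by rewrite /f scalerDr !gD !rmorphD /=; ring.
have fR (t : R) u : f (t%:C *: u) = t%:C * f u.
  by rewrite /f gR scalerA [_ * t%:C]mulrC -scalerA gR !rmorphM /=; ring.
have fI u : f ('i *: u) = 'i * f u.
  by rewrite /f scalerA ii scaleN1r gN rmorphN /= mulrBr mulrA ii; ring.
exists f; split => //.
- move=> k u; rewrite [k]complexE scalerDl -scalerA fD fR fI fR.
  by rewrite mulrDl !mulrA.
- move=> u; apply: le_trans (rnormD _ _) _.
  rewrite rnormN rnormM rnorm_i mul1r !rnormC.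
  by have := g_abs u; have := g_abs ('i *: u); rewrite rnormZ rnorm_i mul1r; lra.
- apply: contraNneq x0_neq0 => fx0; apply/eqP/rnorm_eq0.
  have : complex.Re (f x0) = rnorm x0.
    by rewrite /f raddfB /= mul0r mulr0 subrr subr0 gx0.
  by rewrite fx0.
Qed.

Section BoundedBilinear.
Variable R : realType.
Local Notation K := R[i].
Variables (C B W : normedModType K).

Record bilin := Bilin {
  bilin_fun :> C -> B -> W;
  bilinDl : forall c1 c2 b, bilin_fun (c1 + c2) b = bilin_fun c1 b + bilin_fun c2 b;
  bilinZl : forall (k : K) c b, bilin_fun (k *: c) b = k *: bilin_fun c b;
  bilinDr : forall c b1 b2, bilin_fun c (b1 + b2) = bilin_fun c b1 + bilin_fun c b2;
  bilinZr : forall (k : K) c b, bilin_fun c (k *: b) = k *: bilin_fun c b;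
  bilin_bounded : exists M : R, forall c b,
    rnorm (bilin_fun c b) <= M * rnorm c * rnorm b }.

Lemma bilinP (x y : bilin) : (forall c b, x c b = y c b) -> x = y.
Proof.
case: x y => [f ? ? ? ? ?] [g ? ? ? ? ?] /= fg.
have {fg} fg : f = g by apply/funext => c; apply/funext => b; exact: fg.
by subst g; congr Bilin; exact: Prop_irrelevance.
Qed.

HB.instance Definition _ := gen_eqMixin bilin.
HB.instance Definition _ := gen_choiceMixin bilin.

Lemma rnorm_mul_ge0 (c : C) (b : B) : 0 <= rnorm c * rnorm b.
Proof. by rewrite mulr_ge0 ?rnorm_ge0. Qed.

Definition bilin0 : bilin.
Proof.
refine (@Bilin (fun _ _ => 0) _ _ _ _ _).
- by move=> *; rewrite addr0.
- by move=> *; rewrite scaler0.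
- by move=> *; rewrite addr0.
- by move=> *; rewrite scaler0.
- by exists 0 => c b; rewrite rnorm0 !mul0r.
Defined.

Definition bilin_add (x y : bilin) : bilin.
Proof.
refine (@Bilin (fun c b => x c b + y c b) _ _ _ _ _).
- by move=> *; rewrite !bilinDl addrACA.
- by move=> *; rewrite !bilinZl scalerDr.
- by move=> *; rewrite !bilinDr addrACA.
- by move=> *; rewrite !bilinZr scalerDr.
- case: (bilin_bounded x) (bilin_bounded y) => [M1 h1] [M2 h2].
  exists (M1 + M2) => c b; apply: le_trans (rnormD _ _) _.
  by rewrite !mulrDl lerD.
Defined.

Definition bilin_opp (x : bilin) : bilin.
Proof.
refine (@Bilin (fun c b => - x c b) _ _ _ _ _).
- by move=> *; rewrite bilinDl opprD.
- by move=> *; rewrite bilinZl scalerN.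
- by move=> *; rewrite bilinDr opprD.
- by move=> *; rewrite bilinZr scalerN.
- by case: (bilin_bounded x) => M h; exists M => c b; rewrite rnormN.
Defined.

Definition bilin_scale (k : K) (x : bilin) : bilin.
Proof.
refine (@Bilin (fun c b => k *: x c b) _ _ _ _ _).
- by move=> *; rewrite bilinDl scalerDr.
- by move=> *; rewrite bilinZl !scalerA mulrC.
- by move=> *; rewrite bilinDr scalerDr.
- by move=> *; rewrite bilinZr !scalerA mulrC.
- case: (bilin_bounded x) => M h; exists (rnorm (k : K^o) * M) => c b.
  by rewrite rnormZ -!mulrA ler_wpM2l ?rnorm_ge0 // !mulrA.
Defined.

Lemma bilin_addA : associative bilin_add.
Proof. by move=> x y z; apply: bilinP => c b /=; rewrite addrA. Qed.
Lemma bilin_addC : commutative bilin_add.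
Proof. by move=> x y; apply: bilinP => c b /=; rewrite addrC. Qed.
Lemma bilin_add0 : left_id bilin0 bilin_add.
Proof. by move=> x; apply: bilinP => c b /=; rewrite add0r. Qed.
Lemma bilin_addN : left_inverse bilin0 bilin_opp bilin_add.
Proof. by move=> x; apply: bilinP => c b /=; rewrite addNr. Qed.

HB.instance Definition _ :=
  GRing.isZmodule.Build bilin bilin_addA bilin_addC bilin_add0 bilin_addN.

Lemma bilin_scaleA k l x : bilin_scale k (bilin_scale l x) = bilin_scale (k * l) x.
Proof. by apply: bilinP => c b /=; rewrite scalerA. Qed.
Lemma bilin_scale1 : left_id 1 bilin_scale.
Proof. by move=> x; apply: bilinP => c b /=; rewrite scale1r. Qed.
Lemma bilin_scaleDr : right_distributive bilin_scale +%R.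
Proof. by move=> k x y; apply: bilinP => c b /=; rewrite scalerDr. Qed.
Lemma bilin_scaleDl x : {morph bilin_scale^~ x : k l / k + l}.
Proof. by move=> k l; apply: bilinP => c b /=; rewrite scalerDl. Qed.

HB.instance Definition _ := GRing.Zmodule_isLmodule.Build K bilin
  bilin_scaleA bilin_scale1 bilin_scaleDr bilin_scaleDl.

Implicit Types x y : bilin.

Definition bilin_bounds x : set R :=
  [set M | 0 <= M /\ forall c b, rnorm (x c b) <= M * rnorm c * rnorm b].

Definition bilin_norm x : R := inf (bilin_bounds x).

Lemma bilin_bounds_neq0 x : (bilin_bounds x !=set0)%classic.
Proof.
case: (bilin_bounded x) => M h; exists `|M|; split => // c b.
apply: le_trans (h c b) _; rewrite -!mulrA ler_wpM2r ?rnorm_mul_ge0 //.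
exact: ler_norm.
Qed.

Lemma bilin_norm_ge0 x : 0 <= bilin_norm x.
Proof. by apply: lb_le_inf; [exact: bilin_bounds_neq0 | move=> M []]. Qed.

Lemma bilin_norm_le x M : 0 <= M ->
  (forall c b, rnorm (x c b) <= M * rnorm c * rnorm b) -> bilin_norm x <= M.
Proof. by move=> M0 xM; apply: ge_inf; [exists 0 => m [] | split]. Qed.

Lemma bilin_norm_bound x c b : rnorm (x c b) <= bilin_norm x * rnorm c * rnorm b.
Proof.
rewrite -mulrA; have := rnorm_mul_ge0 c b; rewrite le_eqVlt => /orP[/eqP w0|w0].
  have [M [_ xM]] := bilin_bounds_neq0 x.
  by have := xM c b; rewrite -mulrA -w0 !mulr0.
rewrite -ler_pdivrMr //; apply: lb_le_inf; first exact: bilin_bounds_neq0.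
by move=> M [_ xM]; rewrite ler_pdivrMr // mulrA.
Qed.

Lemma bilin_normD x y : bilin_norm (x + y) <= bilin_norm x + bilin_norm y.
Proof.
apply: bilin_norm_le; first by rewrite addr_ge0 ?bilin_norm_ge0.
move=> c b; apply: le_trans (rnormD _ _) _.
by rewrite !mulrDl lerD ?bilin_norm_bound.
Qed.

Lemma bilin_normZ_le k x : bilin_norm (k *: x) <= rnorm (k : K^o) * bilin_norm x.
Proof.
apply: bilin_norm_le; first by rewrite mulr_ge0 ?rnorm_ge0 ?bilin_norm_ge0.
move=> c b; rewrite /= rnormZ -!mulrA ler_wpM2l ?rnorm_ge0 // !mulrA.
exact: bilin_norm_bound.
Qed.

Lemma bilin_normZ k x : bilin_norm (k *: x) = rnorm (k : K^o) * bilin_norm x.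
Proof.
apply/le_anti; rewrite bilin_normZ_le /=.
have [->|k0] := eqVneq k 0; first by rewrite rnorm0 mul0r bilin_norm_ge0.
have := ler_wpM2l (rnorm_ge0 (k : K^o)) (bilin_normZ_le k^-1 (k *: x)).
by rewrite scalerA mulVf // scale1r mulrA -rnormM mulfV // /rnorm normr1 mul1r.
Qed.

Lemma bilin_norm_eq0 x : bilin_norm x = 0 -> x = 0.
Proof.
move=> x0; apply: bilinP => c b; apply/rnorm_eq0/le_anti.
by rewrite rnorm_ge0 andbT; have := bilin_norm_bound x c b; rewrite x0 !mul0r.
Qed.

Lemma bilin_normCD x y :
  (bilin_norm (x + y))%:C <= (bilin_norm x)%:C + (bilin_norm y)%:C.
Proof. by rewrite -rmorphD lecR bilin_normD. Qed.

Lemma bilin_normCZ (k : K) x : (bilin_norm (k *: x))%:C = `|k| * (bilin_norm x)%:C.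
Proof. by rewrite bilin_normZ rmorphM rnormKE. Qed.

Lemma bilin_normC_eq0 x : (bilin_norm x)%:C = 0 -> x = 0.
Proof. by move=> [/bilin_norm_eq0]. Qed.

HB.instance Definition _ :=
  Lmodule_isNormed.Build K bilin bilin_normCD bilin_normCZ bilin_normC_eq0.

Lemma rnorm_bilin (x : bilin) : rnorm x = bilin_norm x.
Proof. by []. Qed.

End BoundedBilinear.

Section Completeness.
Local Open Scope classical_set_scope.
Variable R : realType.
Local Notation K := R[i].
Variables (C B : normedModType K) (W : completeNormedModType K).
Local Notation X := (bilin C B W).
Variable F : set_system X.
Hypotheses (FF : ProperFilter F) (F_cauchy : cauchy F).

Lemma cauchy_rnorm (r : R) :
  0 < r -> exists x : X, F [set y : X | rnorm (x - y) < r].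
Proof.
move=> r0; have /cauchyP/(_ r%:C) [|x Fx] := F_cauchy; first by rewrite ltcR.
by exists x; apply: filterS Fx => y /ball_rnorm.
Qed.

Lemma cauchy_pointwise c b : cauchy ((fun y : X => y c b) @ F).
Proof.
apply/cauchyP => e /gtr0_ofReal [r r0 ->].
have e0 : 0 < r / (rnorm c * rnorm b + 1).
  by rewrite divr_gt0 ?ltr_wpDl ?rnorm_mul_ge0.
have [x Fx] := cauchy_rnorm e0; exists (x c b).
apply: (filterS (F := F) _ Fx) => y /= xy.
apply/ball_rnorm; rewrite -[x c b - y c b]/((x - y) c b).
apply: le_lt_trans (bilin_norm_bound (x - y) c b) _.
rewrite -mulrA; apply: le_lt_trans (ler_wpM2r (rnorm_mul_ge0 c b) (ltW xy)) _.
by rewrite mulrAC ltr_pdivrMr ?ltr_wpDl ?rnorm_mul_ge0 // mulrDr mulr1 ltrDl.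
Qed.

Let limf c b := lim ((fun y : X => y c b) @ F).

Lemma cvg_limf c b : (fun y : X => y c b) @ F --> limf c b.
Proof. exact: cauchy_cvg (@cauchy_pointwise c b). Qed.

Lemma limf_cvg_eq (g : X -> W) l c b :
  (fun y : X => y c b) = g -> g @ F --> l -> limf c b = l.
Proof. by move=> <-; exact: cvg_lim. Qed.

Lemma limf_le c b w r :
  F [set y | rnorm (y c b - w) <= r] -> rnorm (limf c b - w) <= r.
Proof.
move=> Fr; rewrite leNgt; apply/negP => rlt.
have e0 : 0 < (rnorm (limf c b - w) - r)%:C by rewrite ltcR subr_gt0.
have /cvgrPdist_lt/(_ _ e0) Fl := @cvg_limf c b.
have [y [/= yr]] := filter_ex (filterI Fr Fl); rewrite rnormE ltcR.
by have := rnormD (limf c b - y c b) (y c b - w); rewrite addrA subrK; lra.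
Qed.

Lemma limfDl c1 c2 b : limf (c1 + c2) b = limf c1 b + limf c2 b.
Proof.
apply: (@limf_cvg_eq (fun y => y c1 b + y c2 b)).
  by apply/funext => y; rewrite bilinDl.
exact: cvgD (@cvg_limf c1 b) (@cvg_limf c2 b).
Qed.

Lemma limfDr c b1 b2 : limf c (b1 + b2) = limf c b1 + limf c b2.
Proof.
apply: (@limf_cvg_eq (fun y => y c b1 + y c b2)).
  by apply/funext => y; rewrite bilinDr.
exact: cvgD (@cvg_limf c b1) (@cvg_limf c b2).
Qed.

Lemma limfZl k c b : limf (k *: c) b = k *: limf c b.
Proof.
apply: (@limf_cvg_eq (fun y => k *: y c b)).
  by apply/funext => y; rewrite bilinZl.
exact: cvgZl_tmp (@cvg_limf c b).
Qed.

Lemma limfZr k c b : limf c (k *: b) = k *: limf c b.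
Proof.
apply: (@limf_cvg_eq (fun y => k *: y c b)).
  by apply/funext => y; rewrite bilinZr.
exact: cvgZl_tmp (@cvg_limf c b).
Qed.

Lemma limf_close x r : F [set y | rnorm (x - y) < r] ->
  forall c b, rnorm (limf c b - x c b) <= r * rnorm c * rnorm b.
Proof.
move=> Fx c b; apply: limf_le; apply: filterS Fx => y /= xy.
rewrite -[y c b - x c b]/((y - x) c b); apply: le_trans (bilin_norm_bound _ c b) _.
by rewrite -!mulrA ler_wpM2r ?rnorm_mul_ge0 // -rnorm_bilin -rnormN opprB ltW.
Qed.

Lemma limf_bounded :
  exists M : R, forall c b, rnorm (limf c b) <= M * rnorm c * rnorm b.
Proof.
have [x Fx] := cauchy_rnorm ltr01; exists (1 + bilin_norm x) => c b.
have := rnormD (limf c b - x c b) (x c b); rewrite subrK => /le_trans; apply.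
by rewrite !mulrDl lerD ?limf_close ?bilin_norm_bound.
Qed.

Definition bilin_lim : X := Bilin limfDl limfZl limfDr limfZr limf_bounded.

Lemma cvg_bilin_lim : F --> bilin_lim.
Proof.
apply/cvgrPdist_le => e /gtr0_ofReal [r r0 ->].
have [x Fx] : exists x : X, F [set y : X | rnorm (x - y) < r / 2].
  by apply: cauchy_rnorm; rewrite divr_gt0.
apply: filterS (Fx) => y /= xy; rewrite rnormE lecR.
apply: bilin_norm_le => [|c b]; first exact: ltW.
have := rnormD (limf c b - x c b) ((x - y) c b).
rewrite -[(x - y) c b]/(x c b - y c b) addrA subrK => /le_trans; apply.
have := limf_close Fx c b; have := bilin_norm_bound (x - y) c b.
rewrite -!mulrA -rnorm_bilin.
have := ler_wpM2r (rnorm_mul_ge0 c b) (ltW xy); lra.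
Qed.

End Completeness.

Lemma bilin_complete (R : realType) (C B : normedModType R[i])
  (W : completeNormedModType R[i]) (F : set_system (bilin C B W)) :
  ProperFilter F -> cauchy F -> cvg F.
Proof. by move=> FF Fc; apply/cvg_ex; exists (bilin_lim FF Fc); exact: cvg_bilin_lim. Qed.

HB.instance Definition _ (R : realType) (C B : normedModType R[i])
  (W : completeNormedModType R[i]) :=
  Uniform_isComplete.Build (bilin C B W) (@bilin_complete R C B W).

Lemma rnorm_mul_le (R : realType) (A : completeNormedModType R[i])
    (mul : A -> A -> A) (one : A) : unital_banach_algebra mul one ->
  forall u v, rnorm (mul u v) <= rnorm u * rnorm v.
Proof. by move=> hA u v; have := ba_norm_mul hA u v; rewrite !rnormE -rmorphM lecR. Qed.

Lemma rnorm_one (R : realType) (A : completeNormedModType R[i])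
    (mul : A -> A -> A) (one : A) : unital_banach_algebra mul one -> rnorm one = 1.
Proof. by move=> hA; rewrite /rnorm (ba_norm_one hA). Qed.

Section BilinBimodule.
Variable R : realType.
Local Notation K := R[i].
Variables (B C W : completeNormedModType K).
Variables (mulB : B -> B -> B) (oneB : B) (mulC : C -> C -> C) (oneC : C).
Hypotheses (hB : unital_banach_algebra mulB oneB) (hC : unital_banach_algebra mulC oneC).
Local Notation X := (bilin C B W).

Lemma bilin_mul_bound (x : X) c' c b b' :
  rnorm (x (mulC c' c) (mulB b b')) <=
    rnorm b' * bilin_norm x * rnorm c' * (rnorm c * rnorm b).
Proof.
apply: le_trans (bilin_norm_bound x _ _) _.
rewrite (_ : _ * _ * (_ * _) =
  bilin_norm x * (rnorm c' * rnorm c) * (rnorm b * rnorm b')); last by ring.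
apply: ler_pM; rewrite ?mulr_ge0 ?bilin_norm_ge0 ?rnorm_ge0 //.
  by apply: ler_wpM2l; [exact: bilin_norm_ge0 | exact: (rnorm_mul_le hC c' c)].
exact: (rnorm_mul_le hB b b').
Qed.

Definition bilin_lact (b' : B) (x : X) : X.
Proof.
refine (@Bilin _ _ _ _ (fun c b => x c (mulB b b')) _ _ _ _ _).
- by move=> *; rewrite bilinDl.
- by move=> *; rewrite bilinZl.
- by move=> *; rewrite (ba_mulDl hB) bilinDr.
- by move=> *; rewrite (ba_mulZl hB) bilinZr.
- exists (rnorm b' * bilin_norm x) => c b; rewrite -{1}(ba_mul1l hC c) -mulrA.
  by have := bilin_mul_bound x oneC c b b'; rewrite (rnorm_one hC) mulr1.
Defined.

Definition bilin_ract (x : X) (c' : C) : X.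
Proof.
refine (@Bilin _ _ _ _ (fun c b => x (mulC c' c) b) _ _ _ _ _).
- by move=> *; rewrite (ba_mulDr hC) bilinDl.
- by move=> *; rewrite (ba_mulZr hC) bilinZl.
- by move=> *; rewrite bilinDr.
- by move=> *; rewrite bilinZr.
- exists (bilin_norm x * rnorm c') => c b; rewrite -{1}(ba_mul1r hB b) -mulrA.
  by have := bilin_mul_bound x c' c b oneB; rewrite (rnorm_one hB) mul1r.
Defined.

Lemma bilin_bimodule :
  unital_banach_bimodule mulB oneB mulC oneC bilin_lact bilin_ract.
Proof.
split; try by move=> *; apply: bilinP => * /=;
  rewrite ?(ba_mulDl hB, ba_mulDr hB, ba_mulZl hB, ba_mulZr hB, ba_mulA hB,
            ba_mulDl hC, ba_mulDr hC, ba_mulZl hC, ba_mulZr hC, ba_mulA hC,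
            ba_mul1l hC, ba_mul1r hB, bilinDl, bilinDr, bilinZl, bilinZr).
move=> b' x c'; rewrite !rnormE -!rmorphM lecR rnorm_bilin.
apply: bilin_norm_le => [|c b]; first by rewrite !mulr_ge0 ?rnorm_ge0.
by rewrite -mulrA; exact: bilin_mul_bound.
Qed.

End BilinBimodule.

Section JordanDerivationsAndForms.
Variable R : realType.
Local Notation K := R[i].
Variables (A B C : completeNormedModType K).
Variables (mulA : A -> A -> A) (mulB : B -> B -> B) (oneB : B).
Variables (mulC : C -> C -> C) (oneC : C).
Hypotheses (hB : unital_banach_algebra mulB oneB) (hC : unital_banach_algebra mulC oneC).
Variables (phi : A -> B) (psi : A -> C).

Definition is_jordan_form (V : A -> C -> B -> K) : Prop :=
  forall a c b, V (mulA a a) c b = V a (mulC (psi a) c) b + V a c (mulB b (phi a)).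

Definition is_der_form (V : A -> C -> B -> K) : Prop :=
  forall a d c b, V (mulA a d) c b = V a (mulC (psi d) c) b + V d c (mulB b (phi a)).

Definition jordan_ders_are_ders : Prop :=
  forall (X : completeNormedModType K) (lact : B -> X -> X) (ract : X -> C -> X),
    unital_banach_bimodule mulB oneB mulC oneC lact ract ->
    forall d : A -> X, is_linear d -> is_bounded d ->
      is_jordan_der mulA lact ract +%R phi psi d -> is_der mulA lact ract +%R phi psi d.

Definition jordan_forms_are_der_forms : Prop :=
  forall V : A -> C -> B -> K,
    is_bounded_trilinear V -> is_jordan_form V -> is_der_form V.

Section FormToDerivation.
Variables (W : completeNormedModType K) (w : W) (V : A -> C -> B -> K).
Hypothesis V_tri : is_bounded_trilinear V.

Let V_lin_a := V_tri.1.
Let V_lin_c := V_tri.2.1.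
Let V_lin_b := V_tri.2.2.1.
Let V_bound := V_tri.2.2.2.

Lemma form_slice_bound : exists2 M : R, 0 <= M & forall a c b,
  rnorm (V a c b *: w) <= M * rnorm a * rnorm c * rnorm b.
Proof.
have [M VM] := V_bound; exists (rnorm (M : K^o) * rnorm w) => [|a c b].
  by rewrite mulr_ge0 ?rnorm_ge0.
have -> : rnorm (M : K^o) * rnorm w * rnorm a * rnorm c * rnorm b =
  rnorm (M : K^o) * (rnorm a * rnorm c * rnorm b) * rnorm w by ring.
rewrite rnormZ; apply: ler_wpM2r; first exact: rnorm_ge0.
apply: rnorm_le; first by rewrite !mulr_ge0 ?rnorm_ge0.
by rewrite !rmorphM /= -!rnormE !mulrA; exact: VM.
Qed.

Definition form_slice (a : A) : bilin C B W.
Proof.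
refine (@Bilin _ _ _ _ (fun c b => V a c b *: w) _ _ _ _ _).
- by move=> c1 c2 b; rewrite (V_lin_c a b).1 scalerDl.
- by move=> k c b; rewrite (V_lin_c a b).2 scalerA.
- by move=> c b1 b2; rewrite (V_lin_b a c).1 scalerDl.
- by move=> k c b; rewrite (V_lin_b a c).2 scalerA.
- by have [M _ VM] := form_slice_bound; exists (M * rnorm a).
Defined.

Lemma form_slice_linear : is_linear form_slice.
Proof.
split=> [a1 a2 | k a]; apply: bilinP => c b /=.
  by rewrite (V_lin_a c b).1 scalerDl.
by rewrite (V_lin_a c b).2 scalerA.
Qed.

Lemma form_slice_bounded : is_bounded form_slice.
Proof.
have [M M0 VM] := form_slice_bound; exists M%:C => a.
rewrite !rnormE -rmorphM lecR rnorm_bilin.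
by apply: bilin_norm_le; [rewrite mulr_ge0 ?rnorm_ge0 | exact: VM].
Qed.

Lemma form_slice_jordan : is_jordan_form V ->
  is_jordan_der mulA (bilin_lact hB hC) (bilin_ract hB hC) +%R phi psi form_slice.
Proof. by move=> VJ a; apply: bilinP => c b /=; rewrite VJ scalerDl addrC. Qed.

End FormToDerivation.

(* R[i] is not declared a complete normed module, so the scalar values of V
   are carried into B along oneB. *)
Lemma der_forms_of_jordan_ders : jordan_ders_are_ders -> jordan_forms_are_der_forms.
Proof.
move=> ders V V_tri VJ a d c b.
have oneB_neq0 : oneB != 0.
  apply/eqP => oneB0; have := rnorm_one hB.
  by rewrite oneB0 rnorm0 => /eqP; rewrite eq_sym oner_eq0.
have := ders _ _ _ (bilin_bimodule B hB hC) _ (form_slice_linear oneB V_tri)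
  (form_slice_bounded oneB V_tri) (form_slice_jordan oneB V_tri VJ) a d.
move/(congr1 (fun x : bilin C B B => x c b)) => /= /eqP.
rewrite -scalerDl -subr_eq0 -scalerBl scaler_eq0 (negbTE oneB_neq0) orbF.
by rewrite subr_eq0 => /eqP.
Qed.

Section DerivationToForm.
Variables (X : completeNormedModType K) (lact : B -> X -> X) (ract : X -> C -> X).
Hypothesis hX : unital_banach_bimodule mulB oneB mulC oneC lact ract.
Variables (d : A -> X) (f : X -> K) (M : R).
Hypotheses (d_lin : is_linear d) (d_bounded : is_bounded d).
Hypothesis fD : forall u v, f (u + v) = f u + f v.
Hypothesis fZ : forall k u, f (k *: u) = k * f u.
Hypotheses (M_ge0 : 0 <= M) (f_bounded : forall u, rnorm (f u : K^o) <= M * rnorm u).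

Definition der_form a c b := f (ract (lact b (d a)) c).

Lemma der_form_bounded_trilinear : is_bounded_trilinear der_form.
Proof.
have [[dD dZ] [Md dMd]] := (d_lin, d_bounded).
split; [|split; [|split]].
- by move=> c b; split=> [u v|k u];
    rewrite /der_form (dD, dZ) (bm_lactDr hX, bm_lactZr hX)
      (bm_ractDl hX, bm_ractZl hX) (fD, fZ).
- by move=> a b; split=> [u v|k u];
    rewrite /der_form (bm_ractDr hX, bm_ractZr hX) (fD, fZ).
- by move=> a c; split=> [u v|k u];
    rewrite /der_form (bm_lactDl hX, bm_lactZl hX) (bm_ractDl hX, bm_ractZl hX)
      (fD, fZ).
exists (M * rnorm (Md : K^o))%:C => a c b.
rewrite rnormKE !rnormE -!rmorphM lecR; apply: le_trans (f_bounded _) _.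
have := bm_norm hX b (d a) c; rewrite !rnormE -!rmorphM lecR => bdc.
have da : rnorm (d a) <= rnorm (Md : K^o) * rnorm a.
  by apply: rnorm_le (rnorm_ge0 a) _; rewrite -rnormE.
rewrite (_ : _ * rnorm b =
  M * (rnorm b * (rnorm (Md : K^o) * rnorm a) * rnorm c)); last by ring.
apply: ler_wpM2l => //; apply: le_trans bdc _.
by rewrite ler_wpM2r ?rnorm_ge0 // ler_wpM2l ?rnorm_ge0.
Qed.

Lemma der_form_jordan :
  is_jordan_der mulA lact ract +%R phi psi d -> is_jordan_form der_form.
Proof.
move=> dJ a c b; rewrite /der_form dJ (bm_lactDr hX) (bm_ractDl hX) fD addrC.
by rewrite (bm_lactA hX) -(bm_comm hX) (bm_ractA hX).
Qed.

Lemma der_form_der_defect : is_der_form der_form -> forall a e,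
  f (d (mulA a e) - (ract (d a) (psi e) + lact (phi a) (d e))) = 0.
Proof.
move=> Vder a e; have fB u v : f (u - v) = f u - f v.
  by apply/eqP; rewrite eq_sym subr_eq -fD subrK.
have := Vder a e oneC oneB; rewrite /der_form (ba_mul1r hC) (ba_mul1l hB).
by rewrite !(bm_lact1 hX) !(bm_ract1 hX) fB fD => ->; rewrite subrr.
Qed.

End DerivationToForm.

Lemma jordan_ders_of_der_forms : jordan_forms_are_der_forms -> jordan_ders_are_ders.
Proof.
move=> forms X lact ract hX d d_lin d_bounded dJ a e /=.
apply/eqP; rewrite -subr_eq0; apply: contraT => defect_neq0.
have [f [fD fZ f_bounded f_defect]] := separating_functional defect_neq0.
have V_tri :=
  der_form_bounded_trilinear hX d_lin d_bounded fD fZ (ler0n _ 2) f_bounded.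
have Vder := forms _ V_tri (der_form_jordan hX fD dJ).
by rewrite (der_form_der_defect hX fD Vder) eqxx in f_defect.
Qed.

End JordanDerivationsAndForms.

Theorem lemma3p2 (R : realType)
  (A B C : completeNormedModType R[i])
  (mulA : A -> A -> A) (oneA : A)
  (mulB : B -> B -> B) (oneB : B)
  (mulC : C -> C -> C) (oneC : C)
  (hA : unital_banach_algebra mulA oneA)
  (hB : unital_banach_algebra mulB oneB)
  (hC : unital_banach_algebra mulC oneC)
  (phi : A -> B) (psi : A -> C)
  (hphi : is_alg_hom mulA mulB phi) (hpsi : is_alg_hom mulA mulC psi) :
  (forall (X : completeNormedModType R[i]) (lact : B -> X -> X) (ract : X -> C -> X),
     unital_banach_bimodule mulB oneB mulC oneC lact ract ->
     forall d : A -> X, is_linear d -> is_bounded d ->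
       is_jordan_der mulA lact ract +%R phi psi d ->
       is_der mulA lact ract +%R phi psi d)
  <->
  (forall V : A -> C -> B -> R[i], is_bounded_trilinear V ->
     (forall a c b, V (mulA a a) c b = V a (mulC (psi a) c) b + V a c (mulB b (phi a))) ->
     (forall a d c b, V (mulA a d) c b = V a (mulC (psi d) c) b + V d c (mulB b (phi a)))).
Proof.
(* Neither direction uses the algebra axioms of A nor the multiplicativity
   of phi and psi. *)
split.
  exact: (der_forms_of_jordan_ders (mulA := mulA) (phi := phi) (psi := psi) hB hC).
exact: (jordan_ders_of_der_forms (mulA := mulA) (phi := phi) (psi := psi) hB hC).
Qed.
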